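(* Let $n\geq7$ and let $u,v$ be monomials such that $x_{n-1}u\in\mathcal A$ and $x_nv\in\mathcal C$. If $uv\in G(J(P_{n-2})^2)$, then $x_{n-1}x_nuv\in G(J(P_n)^2)$.
   Context: For $m\geq 1$, $P_m$ is the path graph on vertices $x_1,\ldots,x_m$ with edges $\{x_i,x_{i+1}\}$; $J(P_m)$ is its cover ideal (generated by $\prod_{x\in C}x$, $C$ a minimal vertex cover) and $G(I)$ denotes minimal monomial generators. The rooted list $\mathcal R(P_m)$: $\mathcal R(P_1)$ empty; $\mathcal R(P_2)=x_1,x_2$; $\mathcal R(P_3)=x_2,x_1x_3$; $\mathcal R(P_4)=x_1x_3,x_2x_3,x_2x_4$; for $m\geq5$, if $\mathcal R(P_{m-2})=u_1,\ldots,u_r$ and $\mathcal R(P_{m-3})=v_1,\ldots,v_s$, then $\mathcal R(P_m)=x_{m-1}u_1,\ldots,x_{m-1}u_r,x_mx_{m-2}v_1,\ldots,x_mx_{m-2}v_s$; it lists each element of $G(J(P_m))$ once. For $n\geq7$: $\mathcal A$ is the sublist of $\mathcal R(P_n)$ of elements divisible by $x_{n-1}x_{n-3}$ (equivalently $x_{n-1}x_{n-3}w$, $w\in\mathcal R(P_{n-4})$), and $\mathcal C$ is the sublist of elements divisible by $x_nx_{n-4}$ (equivalently $x_nx_{n-2}x_{n-4}w$, $w\in\mathcal R(P_{n-5})$). *)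

From mathcomp Require Import all_boot.
From Stdlib Require List.

Set Implicit Arguments.
Unset Strict Implicit.
Unset Printing Implicit Defensive.

(* A monomial in the variables x_1, x_2, ... is represented by its exponent
   function: [f i] is the exponent of x_i (index 0 is never used). *)
Definition mono := nat -> nat.

Definition mmul (f g : mono) : mono := fun i => f i + g i.

Definition var (i : nat) : mono := fun j => if j == i then 1 else 0.

Definition mdiv (f g : mono) : Prop := forall i, f i <= g i.
Definition meq (f g : mono) : Prop := forall i, f i = g i.

(* vertex covers of the path P_m on x_1..x_m (edges {x_i, x_{i+1}}) *)
Definition is_cover (m : nat) (C : nat -> bool) : Prop :=
  (forall i, C i -> 1 <= i <= m) /\
  (forall i, 1 <= i -> i < m -> C i || C i.+1).

Definition is_min_cover (m : nat) (C : nat -> bool) : Prop :=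
  is_cover m C /\
  forall D, is_cover m D -> (forall i, D i -> C i) -> forall i, C i -> D i.

Definition cover_mono (C : nat -> bool) : mono := fun i => nat_of_bool (C i).

(* f is in G(J(P_m)) : f = prod_{x in C} x, C a minimal vertex cover *)
Definition genJ (m : nat) (f : mono) : Prop :=
  exists C, is_min_cover m C /\ meq f (cover_mono C).

(* f lies in J(P_m)^2, which is generated by the products g1 g2 of generators *)
Definition inJ2 (m : nat) (f : mono) : Prop :=
  exists g1 g2, genJ m g1 /\ genJ m g2 /\ mdiv (mmul g1 g2) f.

Definition genJ2 (m : nat) (f : mono) : Prop :=
  inJ2 m f /\ forall g, inJ2 m g -> mdiv g f -> meq g f.

Fixpoint rooted (m : nat) : list mono :=
  match m with
  | 0 => nil
  | 1 => nil
  | 2 => var 1 :: var 2 :: nil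
  | 3 => var 2 :: mmul (var 1) (var 3) :: nil
  | 4 => mmul (var 1) (var 3) :: mmul (var 2) (var 3) :: mmul (var 2) (var 4) :: nil
  | S (S ((S k3) as k2)) =>
      List.map (mmul (var m.-1)) (rooted k2) ++
      List.map (mmul (mmul (var m) (var m.-2))) (rooted k3)
  end.

(* membership in the sublist A of R(P_n): elements divisible by x_{n-1}x_{n-3} *)
Definition inA (n : nat) (f : mono) : Prop :=
  exists w, List.In w (rooted n) /\ mdiv (mmul (var n.-1) (var (n - 3))) w /\ meq f w.

(* membership in the sublist C of R(P_n): elements divisible by x_n x_{n-4} *)
Definition inC (n : nat) (f : mono) : Prop :=
  exists w, List.In w (rooted n) /\ mdiv (mmul (var n) (var (n - 4))) w /\ meq f w.

From mathcomp Require Import all_boot zify.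
From Stdlib Require Import Classical.

Set Implicit Arguments.
Unset Strict Implicit.
Unset Printing Implicit Defensive.

(* The hypothesis x_n v in C forces x_{n-2} | v, so x_{n-2} | uv.  Writing
   uv = x^K1 x^K2 for minimal covers K1, K2 of P_{n-2}, one of them, say K2,
   contains n-2; then K1 + {n-1} and K2 + {n} cover P_n, which puts
   x_{n-1} x_n uv in J(P_n)^2.  Conversely, two covers H1, H2 of P_n whose
   product divides x_{n-1} x_n uv restrict to covers of P_{n-2} whose product
   divides uv, hence equals uv by minimality; and the edge {x_{n-1}, x_n} forces
   H1 and H2 to supply x_{n-1} and x_n between them. *)

Lemma var_id i : var i i = 1.
Proof. by rewrite /var eqxx. Qed.

Lemma var_neq j i : i != j -> var j i = 0.
Proof. by rewrite /var => /negbTE ->. Qed.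

Lemma mdiv_refl f : mdiv f f.
Proof. by []. Qed.

Lemma mdiv_trans g f h : mdiv f g -> mdiv g h -> mdiv f h.
Proof. by move=> fg gh i; apply: leq_trans (fg i) (gh i). Qed.

Lemma mdiv_antisym f g : mdiv f g -> mdiv g f -> meq f g.
Proof. by move=> fg gf i; apply/eqP; rewrite eqn_leq fg gf. Qed.

Lemma count_lt_subpred (T : eqType) (a b : pred T) x s :
  subpred a b -> b x -> ~~ a x -> x \in s -> count a s < count b s.
Proof.
move=> ab bx nax; elim: s => //= y s IHs; rewrite inE => /orP[/eqP <- | xs].
  by rewrite bx (negbTE nax) add0n add1n ltnS sub_count.
have := IHs xs; case/boolP: (a y) => [/ab -> | _]; lia.
Qed.

Section Covers.

Variable m : nat.

Lemma cover_out C i : is_cover m C -> m < i -> C i = false.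
Proof. by move=> [supp _] ltmi; apply/negP => /supp; lia. Qed.

Lemma cover_mono_le C D i : subpred D C -> cover_mono D i <= cover_mono C i.
Proof. by rewrite /cover_mono => DC; case/boolP: (D i) => // /DC ->. Qed.

Lemma exists_min_subcover C :
  is_cover m C -> exists2 D, is_min_cover m D & subpred D C.
Proof.
have [k] := ubnP (count C (iota 1 m)); elim: k C => // k IH C ltCk coverC.
have [minC | not_minC] := classic (is_min_cover m C); first by exists C.
have [D [coverD DC [i Ci nDi]]] :
    exists D, [/\ is_cover m D, subpred D C & exists2 i, C i & ~~ D i].
  apply: NNPP => no_smaller; apply: not_minC; split => // D coverD DC i Ci.
  apply: contraT => nDi; exfalso.
  by apply: no_smaller; exists D; split => //; exists i.
have ltDC : count D (iota 1 m) < count C (iota 1 m).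
  apply: (count_lt_subpred DC Ci nDi).
  by rewrite mem_iota; have := coverC.1 i Ci; lia.
have [E minE ED] := IH D (leq_trans ltDC ltCk) coverD.
by exists E => // j /ED /DC.
Qed.

Lemma inJ2_of_covers C1 C2 f : is_cover m C1 -> is_cover m C2 ->
  mdiv (mmul (cover_mono C1) (cover_mono C2)) f -> inJ2 m f.
Proof.
move=> /exists_min_subcover [D1 minD1 D1C1].
move=> /exists_min_subcover [D2 minD2 D2C2] Cf.
exists (cover_mono D1), (cover_mono D2).
split; first by exists D1.
split; first by exists D2.
apply: mdiv_trans Cf => i; rewrite /mmul.
by apply: leq_add; apply: cover_mono_le.
Qed.

Lemma genJ2_min_covers f : genJ2 m f -> exists K1 K2,
  [/\ is_min_cover m K1, is_min_cover m K2 &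
      meq f (mmul (cover_mono K1) (cover_mono K2))].
Proof.
move=> [[g1 [g2 [[K1 [minK1 eg1]] [[K2 [minK2 eg2]] g12f]]]] minf].
have g12J2 : inJ2 m (mmul g1 g2).
  by exists g1, g2; split; [exists K1 | split; [exists K2 |]].
by exists K1, K2; split => // i; rewrite -(minf _ g12J2 g12f i) /mmul eg1 eg2.
Qed.

Lemma is_cover_restrict n C : m <= n -> is_cover n C ->
  is_cover m (fun i => C i && (i <= m)).
Proof.
move=> le_mn [supp edge]; split => [i /andP [/supp] | i i_ge1 lt_im]; first lia.
by rewrite (ltnW lt_im) lt_im !andbT; apply: edge => //; lia.
Qed.

Lemma is_cover_add_succ K : is_cover m K ->
  is_cover m.+2 (fun i => K i || (i == m.+1)).
Proof.
move=> [supp edge]; split => [i /orP [/supp | /eqP ->] | i i_ge1 lt_im2]; try lia.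
case: (ltngtP i m) => [lt_im | | ->]; last by rewrite eqxx !orbT.
  by case/orP: (edge i i_ge1 lt_im) => ->; rewrite ?orbT.
move=> lt_mi; have -> : i = m.+1 by lia.
by rewrite eqxx !orbT.
Qed.

Lemma is_cover_add_last K : is_cover m K -> K m ->
  is_cover m.+2 (fun i => K i || (i == m.+2)).
Proof.
move=> [supp edge] Km; split => [i /orP [/supp | /eqP ->] | i i_ge1 lt_im2]; try lia.
case: (ltngtP i m) => [lt_im | | ->]; last by rewrite Km.
  by case/orP: (edge i i_ge1 lt_im) => ->; rewrite ?orbT.
move=> lt_mi; have -> : i = m.+1 by lia.
by rewrite eqxx !orbT.
Qed.

End Covers.

Lemma genJ2_out m f i : genJ2 m f -> m < i -> f i = 0.
Proof.
move=> /genJ2_min_covers [K1 [K2 [[cK1 _] [cK2 _] eqf]]] lt_mi.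
by rewrite eqf /mmul /cover_mono !(cover_out _ lt_mi).
Qed.

Section Extension.

Variables (m : nat) (f : mono).
Hypothesis fJ2 : genJ2 m f.

Lemma inJ2_extend_covers K1 K2 : is_cover m K1 -> is_cover m K2 -> K2 m ->
  meq f (mmul (cover_mono K1) (cover_mono K2)) ->
  inJ2 m.+2 (mmul (mmul (var m.+1) (var m.+2)) f).
Proof.
move=> cK1 cK2 K2m eqf.
apply: (inJ2_of_covers (is_cover_add_succ cK1) (is_cover_add_last cK2 K2m)) => i.
rewrite /mmul /cover_mono eqf /mmul /cover_mono /var.
by case: (K1 i); case: (K2 i); case: (i == m.+1); case: (i == m.+2).
Qed.

Lemma inJ2_extend : 0 < f m -> inJ2 m.+2 (mmul (mmul (var m.+1) (var m.+2)) f).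
Proof.
have [K1 [K2 [[cK1 _] [cK2 _] eqf]]] := genJ2_min_covers fJ2.
rewrite eqf /mmul /cover_mono; case/boolP: (K2 m) => [K2m _ | _].
  exact: inJ2_extend_covers cK1 cK2 K2m eqf.
rewrite addn0 lt0b => K1m; apply: (inJ2_extend_covers cK2 cK1 K1m) => i.
by rewrite eqf /mmul addnC.
Qed.

Lemma genJ2_extend_min g : inJ2 m.+2 g ->
  mdiv g (mmul (mmul (var m.+1) (var m.+2)) f) ->
  meq g (mmul (mmul (var m.+1) (var m.+2)) f).
Proof.
move=> [h1 [h2 [[H1 [[cH1 _] eh1]] [[H2 [[cH2 _] eh2]] h12g]]]] gf.
have h12f := mdiv_trans h12g gf.
suff fh12 : mdiv (mmul (mmul (var m.+1) (var m.+2)) f) (mmul h1 h2).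
  exact: mdiv_antisym gf (mdiv_trans fh12 h12g).
pose R1 i := H1 i && (i <= m); pose R2 i := H2 i && (i <= m).
have R12f : mdiv (mmul (cover_mono R1) (cover_mono R2)) f.
  move=> i; have := h12f i; rewrite /mmul /cover_mono /R1 /R2 eh1 eh2.
  case: (leqP i m) => [le_im | _]; last by rewrite !andbF.
  by rewrite !andbT !var_neq ?add0n //; lia.
have R12J2 : inJ2 m (mmul (cover_mono R1) (cover_mono R2)).
  have le_m_m2 : m <= m.+2 by rewrite leqW.
  exact: inJ2_of_covers (is_cover_restrict le_m_m2 cH1)
    (is_cover_restrict le_m_m2 cH2) (mdiv_refl _).
have eqR12 := fJ2.2 _ R12J2 R12f.
(* each of H1, H2 covers the edge {m+1, m+2}, but together they meet each of
   these vertices at most once *)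
have [top1 top2] : 0 < H1 m.+1 + H2 m.+1 /\ 0 < H1 m.+2 + H2 m.+2.
  have := h12f m.+1; have := h12f m.+2.
  rewrite /mmul !eh1 !eh2 /cover_mono !var_id !var_neq ?(genJ2_out fJ2) //;
    try lia.
  have := cH1.2 m.+1 isT (ltnSn _); have := cH2.2 m.+1 isT (ltnSn _).
  by case: (H1 m.+1); case: (H1 m.+2); case: (H2 m.+1); case: (H2 m.+2).
move=> i; rewrite /mmul eh1 eh2 /cover_mono.
case: (leqP i m) => [le_im | lt_mi].
  rewrite !var_neq ?add0n -?(eqR12 i) /mmul /cover_mono /R1 /R2 ?le_im ?andbT //;
    lia.
rewrite (genJ2_out fJ2 lt_mi) addn0.
case: (eqVneq i m.+1) => [-> | ne1]; first by rewrite var_id var_neq //; lia.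
case: (eqVneq i m.+2) => [-> | ne2]; first by rewrite var_id var_neq //; lia.
by rewrite !var_neq.
Qed.

Lemma genJ2_extend : 0 < f m ->
  genJ2 m.+2 (mmul (mmul (var m.+1) (var m.+2)) f).
Proof. by move=> fm; split; [exact: inJ2_extend | exact: genJ2_extend_min]. Qed.

End Extension.

Lemma rooted_rec k : rooted k.+4.+1 =
  List.map (mmul (var k.+4)) (rooted k.+3) ++
  List.map (mmul (mmul (var k.+4.+1) (var k.+3))) (rooted k.+2).
Proof. by []. Qed.

Lemma rooted_out m w i : List.In w (rooted m) -> m < i -> w i = 0.
Proof.
elim/ltn_ind: m w => m IH w.
case: m IH => [|[|[|[|[|k]]]]] IH //.
- by case=> [<- | [<- | []]] lt_mi; rewrite var_neq //; lia.
- by case=> [<- | [<- | []]] lt_mi; rewrite /mmul !var_neq //; lia.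
- by case=> [<- | [<- | [<- | []]]] lt_mi; rewrite /mmul !var_neq //; lia.
- rewrite rooted_rec => /(List.in_app_or _ _ _) [] /(List.in_map_iff _ _ _).
  all: move=> [r [<- r_in]] lt_ki.
  all: by rewrite /mmul !var_neq ?(IH _ _ _ r_in) //; lia.
Qed.

Lemma rooted_last_pos_sub2 m w : 0 < m -> List.In w (rooted m.+2) ->
  0 < w m.+2 -> 0 < w m.
Proof.
case: m => [|[|[|k]]] // _.
- by case=> [<- | [<- | []]].
- by case=> [<- | [<- | [<- | []]]].
rewrite rooted_rec => /(List.in_app_or _ _ _) [] /(List.in_map_iff _ _ _).
  move=> [r [<- r_in]].
  by rewrite /mmul var_neq ?(rooted_out (i := k.+4.+1) r_in) //; lia.
move=> [r [<- r_in]].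
by rewrite /mmul !var_id var_neq //; lia.
Qed.

Theorem lemma3p12 (n : nat) (u v : mono) :
  7 <= n ->
  inA n (mmul (var n.-1) u) ->
  inC n (mmul (var n) v) ->
  genJ2 (n - 2) (mmul u v) ->
  genJ2 n (mmul (mmul (var n.-1) (var n)) (mmul u v)).
Proof.
move=> n_ge7 _ [w [w_rooted [_ eqw]]] uvJ2.
have [m def_n] : exists m, n = m.+2 by exists (n - 2); lia.
subst n; rewrite subn2 /= in uvJ2.
apply: genJ2_extend uvJ2 _.
have w_m : 0 < w m.
  by apply: (rooted_last_pos_sub2 _ w_rooted); [lia | rewrite -eqw /mmul var_id].
have v_m : 0 < v m by move: w_m; rewrite -eqw /mmul var_neq //; lia.
by rewrite /mmul addn_gt0 v_m orbT.
Qed.
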